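(* Let $\mathbb{F}\in\{\mathbb{R},\mathbb{C}\}$, let $\{\mathcal{B}_k\}_{k\in K}$ be a maximal set of mutually unbiased bases for $\mathbb{F}^m$, so $|K|=k_{\mathbb{F}}(m)$, and let $\mathbb{S}$ be a collection of subsets of $\{1,\dots,m\}$, each of size $l$. Suppose $\mathcal{F}=\{P^{(k)}_{\mathcal{J}}:k\in K,\ \mathcal{J}\in\mathbb{S}\}$ is a $(2d_{\mathbb{F}}(m),m/2,m)$-fusion frame, where $P^{(k)}_{\mathcal{J}}$ is the $\mathcal{J}$-coordinate projection with respect to $\mathcal{B}_k$. Then $\mathcal{F}$ is a Grassmannian $2$-design if and only if $\mathbb{S}$ is a $2$-$(m,m/2,m/2-1)$ block design.
   Context: Orthonormal bases $\{b_j\},\{b'_j\}$ of $\mathbb{F}^m$ are mutually unbiased if $|\langle b_j,b'_{j'}\rangle|^2=1/m$ for all $j,j'$; a set of mutually unbiased bases consists of pairwise mutually unbiased orthonormal bases, and it is maximal if it has $k_{\mathbb{F}}(m)$ elements, where $k_{\mathbb{R}}(m)=m/2+1$, $k_{\mathbb{C}}(m)=m+1$. Let $d_{\mathbb{F}}(m)=\frac{(m+2)(m-1)}{2}$ if $\mathbb{F}=\mathbb{R}$ and $m^2-1$ if $\mathbb{F}=\mathbb{C}$. The $\mathcal{J}$-coordinate projection with respect to $\{b_j\}$ is $\sum_{j\in\mathcal{J}}b_j\otimes b_j^*$. An $(n,l,m)$-fusion frame is a set of $n$ orthogonal projections onto $l$-dimensional subspaces of $\mathbb{F}^m$ with $A\|x\|^2\le\sum_j\|P_jx\|^2\le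 B\|x\|^2$ for some $0<A\le B$. A fusion frame $\{P_j\}_{j=1}^n$ is a Grassmannian $2$-design if $\sum_jP_j\otimes P_j=\sum_j(UP_jU^* )\otimes(UP_jU^* )$ for every orthogonal (real case) or unitary (complex case) $U$. A $2$-$(m,l,\lambda)$ block design is a collection of $l$-element subsets of $\{1,\dots,m\}$ such that every $2$-element subset is contained in exactly $\lambda$ of them. *)

From HB Require Import structures.
From mathcomp Require Import all_boot all_order all_algebra.
From mathcomp Require Import complex mxtens.
From mathcomp Require Import reals.
Set Implicit Arguments. Unset Strict Implicit. Unset Printing Implicit Defensive.
Import Order.TTheory GRing.Theory Num.Theory.
Local Open Scope ring_scope.

(* The scalar field F in {R, C}: [Fld R false] is the real field R,
   [Fld R true] is the complex field R[i]. *)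
Definition Fld (R : rcfType) (c : bool) : numFieldType :=
  if c then (R[i] : numFieldType) else (R : numFieldType).

Definition fconj (R : rcfType) (c : bool) : Fld R c -> Fld R c :=
  if c as b return Fld R b -> Fld R b then (fun z : R[i] => z^*)%C else id.

Section Generic.
Variables (T : numFieldType) (cj : T -> T).

Definition adjmx {p q : nat} (A : 'M[T]_(p, q)) : 'M[T]_(q, p) := map_mx cj A^T.

Definition inner {m : nat} (u v : 'cV[T]_m) : T := \sum_(i < m) u i 0 * cj (v i 0).

Definition normsq {m : nat} (u : 'cV[T]_m) : T := inner u u.

Definition onb {m : nat} (B : 'M[T]_m) : Prop :=
  forall i j : 'I_m, inner (col i B) (col j B) = (i == j)%:R.

Definition mub_set {m n : nat} (B : 'I_n -> 'M[T]_m) : Prop :=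
  (forall k, onb (B k)) /\
  forall k k' : 'I_n, k != k' -> forall j j' : 'I_m,
    `|inner (col j (B k)) (col j' (B k'))| ^+ 2 = (m%:R)^-1.

Definition coord_proj {m : nat} (B : 'M[T]_m) (J : {set 'I_m}) : 'M[T]_m :=
  \sum_(j in J) col j B *m adjmx (col j B).

Definition fusion_frame (n l m : nat) (I : finType) (D : {pred I})
    (P : I -> 'M[T]_m) : Prop :=
  #|D| = n /\
  (forall i, i \in D -> [/\ P i *m P i = P i, adjmx (P i) = P i & \rank (P i) = l]) /\
  exists A B : T, [/\ 0 < A, A <= B &
    forall x : 'cV[T]_m,
      A * normsq x <= \sum_(i in D) normsq (P i *m x) <= B * normsq x].

Definition grass2design (m : nat) (I : finType) (D : {pred I})
    (P : I -> 'M[T]_m) : Prop :=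
  forall U : 'M[T]_m, adjmx U *m U = 1%:M ->
    \sum_(i in D) (P i *t P i) =
    \sum_(i in D) ((U *m P i *m adjmx U) *t (U *m P i *m adjmx U)).

End Generic.

(* 2-(m,l,lam) block design on {1..m} (represented as 'I_m) *)
Definition block_design2 (m l lam : nat) (S : {set {set 'I_m}}) : Prop :=
  (forall J, J \in S -> #|J| = l) /\
  forall T : {set 'I_m}, #|T| = 2 -> #|[set J in S | T \subset J]| = lam.

Definition kF (c : bool) (m : nat) : nat := if c then m.+1 else m./2.+1.
Definition dF (c : bool) (m : nat) : nat :=
  if c then (m ^ 2 - 1)%N else ((m + 2) * (m - 1) %/ 2)%N.
Arguments block_design2 : clear implicits.

From HB Require Import structures.
From mathcomp Require Import all_boot all_order all_algebra.
From mathcomp Require Import complex mxtens.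
From mathcomp Require Import reals.
From mathcomp Require Import ring zify perm.
Set Implicit Arguments. Unset Strict Implicit. Unset Printing Implicit Defensive.
Import Order.TTheory GRing.Theory Num.Theory.

(* Write p_(k,j) for the rank-one projection onto the j-th vector of the k-th
   basis and N(a, a') for the number of blocks of S containing both a and a'.
   Expanding the coordinate projections,
     sum_(k, J) P_J^(k) (x) P_J^(k) = sum_k sum_(j, j') N(j, j') p_(k,j) (x) p_(k,j').
   If S is a 2-(m, m/2, m/2 - 1) design then N(j, j') = m/2 - 1 + (m/2) [j = j'],
   so the sum is a multiple of 1 (x) 1 plus m/2 times sum_(k, j) p_(k,j) (x) p_(k,j).
   A maximal set of MUBs is a projective 2-design: the latter tensor equals the
   fixed matrix al (1 + W) + be vec(1) vec(1)^*, because the Hilbert-Schmidt norm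
   of the difference vanishes.  As unitaries map MUBs to MUBs, the sum is
   unitarily invariant.
   Conversely, the quadratic form of the sum at b_a (x) b_a', for two vectors of
   one basis, is N(a, a') plus a constant.  The unitary permuting that basis
   leaves the sum invariant, so N is invariant under all permutations, hence
   constant off the diagonal, and double counting with |S| = 2 (m - 1) (forced
   by the size of the frame) fixes the constant to m/2 - 1. *)

Section PairCounts.
Variables (m : nat) (S : {set {set 'I_m}}).

Definition pair_count (a a' : 'I_m) := #|[set J in S | (a \in J) && (a' \in J)]|.
Definition replication (a : 'I_m) := #|[set J in S | a \in J]|.

Lemma card_blocks (P : pred {set 'I_m}) : #|[set J in S | P J]| = \sum_(J in S) P J.
Proof. by rewrite -sum1dep_card big_mkcondr; apply: eq_bigr => J _; case: (P J). Qed.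

Lemma card_pair_blocks a a' : #|[set J in S | [set a; a'] \subset J]| = pair_count a a'.
Proof. by apply: eq_card => J; rewrite !inE subUset !sub1set. Qed.

Lemma sum_replication : \sum_a replication a = \sum_(J in S) #|J|.
Proof.
under eq_bigr => a _ do rewrite /replication card_blocks.
rewrite exchange_big; apply: eq_bigr => J _.
by rewrite -sum1_card [RHS]big_mkcond; apply: eq_bigr => a _; case: (a \in J).
Qed.

Lemma sum_pair_count a :
  \sum_(a' | a' != a) pair_count a a' = \sum_(J in S | a \in J) (#|J| - 1).
Proof.
under eq_bigr => a' _ do rewrite /pair_count card_blocks.
rewrite exchange_big /= big_mkcondr; apply: eq_bigr => J _.
have [aJ|_] /= := boolP (a \in J); last by rewrite big1.
rewrite (cardD1 a J) aJ add1n subn1 -sum1_card big_mkcond [RHS]big_mkcond /=.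
by apply: eq_bigr => a' _; rewrite !inE andbC; case: (a' \in J); case: (a' != a).
Qed.

Variable h : nat.
Hypothesis uniformS : forall J, J \in S -> #|J| = h.

Lemma sum_replication_uniform : \sum_a replication a = #|S| * h.
Proof. by rewrite sum_replication (eq_bigr (fun _ => h)) ?sum_nat_const // => J /uniformS. Qed.

Lemma sum_pair_count_uniform a :
  \sum_(a' | a' != a) pair_count a a' = replication a * (h - 1).
Proof.
rewrite sum_pair_count (eq_bigr (fun _ => h - 1)) => [|J /andP[/uniformS ->]] //.
by rewrite sum_nat_cond_const.
Qed.

Lemma sum_nat_const_neq (a : 'I_m) c : \sum_(a' | a' != a) c = (m - 1) * c.
Proof. by rewrite sum_nat_cond_const cardsE cardC1 card_ord subn1. Qed.

Lemma replication_pair_count lam :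
  (forall a a', a != a' -> pair_count a a' = lam) ->
  forall a, replication a * (h - 1) = (m - 1) * lam.
Proof.
move=> balanced a; rewrite -sum_pair_count_uniform -(sum_nat_const_neq a).
by apply: eq_bigr => a' a'a; rewrite balanced // eq_sym.
Qed.

Lemma pair_count_const a0 a0' : a0 != a0' ->
  (forall a a' c c', a != a' -> c != c' -> pair_count a a' = pair_count c c') ->
  m * (m - 1) * pair_count a0 a0' = #|S| * h * (h - 1).
Proof.
move=> a0a0' balanced; rewrite -mulnA -sum_replication_uniform big_distrl /=.
transitivity (\sum_(a < m) (m - 1) * pair_count a0 a0').
  by rewrite sum_nat_const card_ord.
apply: eq_bigr => a _; rewrite -sum_pair_count_uniform -(sum_nat_const_neq a).
by apply: eq_bigr => a' a'a; apply: balanced; rewrite // eq_sym.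
Qed.

End PairCounts.

Section HalfDesign.
Variables (m h : nat) (S : {set {set 'I_m}}).
Hypotheses (m_eq : m = h.*2) (h_gt0 : 0 < h) (cardS : #|S| = 2 * (m - 1)).
Hypothesis uniformS : forall J, J \in S -> #|J| = h.

Lemma pair_count_half a a' : a != a' ->
  (forall a a' c c', a != a' -> c != c' -> pair_count S a a' = pair_count S c c') ->
  pair_count S a a' = h - 1.
Proof.
move=> aa' /(pair_count_const uniformS aa'); rewrite cardS => counted.
have m_pos : 0 < m * (m - 1) by rewrite muln_gt0 subn_gt0 m_eq; lia.
apply/eqP; rewrite -(eqn_pmul2l m_pos) counted; apply/eqP.
by rewrite [X in _ = X * _ * _]m_eq -mul2n; ring.
Qed.

Lemma replication_half :
  (forall a a', a != a' -> pair_count S a a' = h - 1) ->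
  forall a, replication S a = m - 1.
Proof.
move=> offdiag a; have [h_le1|h_gt1] := leqP h 1; last first.
  apply/eqP; rewrite -(eqn_pmul2r (_ : 0 < h - 1)) ?subn_gt0 //.
  by rewrite (replication_pair_count uniformS offdiag).
have h1 : h = 1 by lia.
(* The blocks are singletons, so each point lies in at most one of them. *)
have r_le1 b : replication S b <= 1.
  rewrite -(cards1 [set b]); apply/subset_leq_card/subsetP => J.
  rewrite !inE => /andP[/uniformS cardJ bJ].
  move/eqP: cardJ; rewrite h1 => /cards1P[x Jx].
  by move: bJ; rewrite Jx !inE => /eqP->.
have total := sum_replication_uniform uniformS.
rewrite (bigD1 a) //= cardS h1 in total.
have rest_le : \sum_(b < m | b != a) replication S b <= (m - 1) * 1.
  by rewrite -(sum_nat_const_neq a); apply: leq_sum.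
set rest := \sum_(b < m | b != a) replication S b in total rest_le.
have := r_le1 a; lia.
Qed.

Lemma pair_count_half_design :
  (forall a a', a != a' -> pair_count S a a' = h - 1) ->
  forall j j', pair_count S j j' = h - 1 + h * (j == j').
Proof.
move=> offdiag j j'; have [jj'|jj'] := eqVneq j j'; last by rewrite offdiag // muln0 addn0.
rewrite -jj' muln1; have -> : pair_count S j j = replication S j.
  by apply: eq_card => J; rewrite !inE andbb.
by rewrite (replication_half offdiag); lia.
Qed.

End HalfDesign.

Lemma perm_invariant_offdiag (I : finType) (X : Type) (f : I -> I -> X) :
  (forall (s : {perm I}) a a', f (s a) (s a') = f a a') ->
  forall a a' c c', a != a' -> c != c' -> f a a' = f c c'.
Proof.
move=> f_inv a a' c c' aa' cc'; rewrite -(f_inv (tperm a c)) tpermL.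
have dc : tperm a c a' != c by rewrite -{2}(tpermL a c) (inj_eq perm_inj) eq_sym.
by rewrite -(f_inv (tperm (tperm a c a') c')) tpermL tpermD // eq_sym.
Qed.

Local Open Scope ring_scope.

Section TensorBilinear.
Variable R : comPzRingType.

Lemma tensmx_suml p q r s (I : Type) (t : seq I) (P : pred I)
    (F : I -> 'M[R]_(p, q)) (C : 'M[R]_(r, s)) :
  (\sum_(i <- t | P i) F i) *t C = \sum_(i <- t | P i) (F i *t C).
Proof.
apply/matrixP => x y; rewrite !mxE !summxE mulr_suml.
by apply: eq_bigr => i _; rewrite !mxE.
Qed.

Lemma tensmx_sumr p q r s (I : Type) (t : seq I) (P : pred I)
    (F : I -> 'M[R]_(p, q)) (C : 'M[R]_(r, s)) :
  C *t (\sum_(i <- t | P i) F i) = \sum_(i <- t | P i) (C *t F i).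
Proof.
apply/matrixP => x y; rewrite !mxE !summxE mulr_sumr.
by apply: eq_bigr => i _; rewrite !mxE.
Qed.

Lemma tensmxZl p q r s a (A : 'M[R]_(p, q)) (C : 'M[R]_(r, s)) :
  (a *: A) *t C = a *: (A *t C).
Proof. by apply/matrixP => x y; rewrite !mxE mulrA. Qed.

Lemma tensmxZr p q r s a (A : 'M[R]_(p, q)) (C : 'M[R]_(r, s)) :
  A *t (a *: C) = a *: (A *t C).
Proof. by apply/matrixP => x y; rewrite !mxE mulrCA. Qed.

Lemma sum_mxtens_index p q (F : 'I_(p * q) -> R) :
  \sum_k F k = \sum_a \sum_b F (mxtens_index (a, b)).
Proof.
rewrite pair_bigA (reindex (@mxtens_index p q)) /=; last first.
  by exists (@mxtens_unindex p q) => x _; rewrite ?mxtens_indexK ?mxtens_unindexK.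
by apply: eq_bigr => -[a b].
Qed.

End TensorBilinear.

Section Adjoint.
Variables (T : numFieldType) (cj : T -> T).

Local Notation adj := (adjmx cj).
Local Notation inner := (inner cj).

Lemma adjmxE p q (A : 'M[T]_(p, q)) i j : adj A i j = cj (A j i).
Proof. by rewrite !mxE. Qed.

Lemma innerE m (u v : 'cV[T]_m) : inner u v = (adj v *m u) 0 0.
Proof. by rewrite /inner mxE; apply: eq_bigr => i _; rewrite adjmxE mulrC. Qed.

Lemma onbP m (B : 'M[T]_m) : onb cj B <-> adj B *m B = 1%:M.
Proof.
split => [onbB|BB i j].
  apply/matrixP => i j; rewrite !mxE; have := onbB j i; rewrite eq_sym => <-.
  by apply: eq_bigr => k _; rewrite !mxE mulrC.
move/matrixP: BB => /(_ j i); rewrite !mxE eq_sym => <-.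
by apply: eq_bigr => k _; rewrite !mxE mulrC.
Qed.

Lemma onb_mul_adj m (B : 'M[T]_m) : onb cj B -> B *m adj B = 1%:M.
Proof. by move/onbP/mulmx1C. Qed.

Lemma onb_col_perm m (B : 'M[T]_m) (s : 'S_m) : onb cj B -> onb cj (col_perm s B).
Proof.
move=> onbB i j; have col_s k : col k (col_perm s B) = col (s k) B.
  by apply/matrixP => a b; rewrite !mxE.
by rewrite !col_s onbB (inj_eq perm_inj).
Qed.

Lemma rank_isometry p q (M : 'M[T]_(p, q)) :
  adj M *m M = 1%:M -> \rank (M *m adj M) = q.
Proof.
move=> MM; apply/eqP; rewrite eqn_leq (leq_trans (mxrankM_maxl _ _)) ?rank_leq_col //=.
apply: (@leq_trans (\rank (adj M *m (M *m adj M) *m M))).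
  by rewrite mulmxA MM mul1mx MM mxrank1.
exact: leq_trans (mxrankM_maxl _ _) (mxrankM_maxr _ _).
Qed.

Lemma rank_coord_proj m (B : 'M[T]_m) J : onb cj B -> \rank (coord_proj cj B J) = #|J|.
Proof.
move=> /onbP /matrixP BB; pose M := colsub (@enum_val _ (mem J)) B.
have -> : coord_proj cj B J = M *m adj M.
  apply/matrixP => a b; rewrite summxE !mxE big_enum_val.
  by apply: eq_bigr => t _; rewrite !mxE big_ord1 !mxE.
apply: rank_isometry; apply/matrixP => s t.
have := BB (enum_val s) (enum_val t); rewrite !mxE (inj_eq enum_val_inj) => <-.
by apply: eq_bigr => a _; rewrite !mxE.
Qed.

Lemma fusion_frame_blocks n m d l (B : 'I_n -> 'M[T]_m) (S : {set {set 'I_m}}) (k0 : 'I_n) :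
  mub_set cj B ->
  fusion_frame cj d l [pred p : 'I_n * {set 'I_m} | p.2 \in S]
    (fun p => coord_proj cj (B p.1) p.2) ->
  (forall J, J \in S -> #|J| = l) /\ (n * #|S|)%N = d.
Proof.
move=> [onbB _] [cardD [projP _]]; split.
  by move=> J SJ; have [_ _ <-] := projP (k0, J) SJ; rewrite rank_coord_proj.
by rewrite -cardD -[n in LHS]card_ord -cardX; apply: eq_card => -[k J]; rewrite !inE.
Qed.

End Adjoint.

Section Conjugation.
Variables (T : numFieldType) (cj : {rmorphism T -> T}).
Hypothesis cjK : involutive cj.
Hypothesis mul_conj : forall x, x * cj x = `|x| ^+ 2.

Local Notation adj := (adjmx cj).
Local Notation inner := (inner cj).

Lemma adjmxK p q (A : 'M[T]_(p, q)) : adj (adj A) = A.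
Proof. by apply/matrixP => i j; rewrite !adjmxE cjK. Qed.

Lemma adjmxM p q r (A : 'M[T]_(p, q)) (B : 'M[T]_(q, r)) :
  adj (A *m B) = adj B *m adj A.
Proof.
apply/matrixP => i j; rewrite adjmxE !mxE rmorph_sum; apply: eq_bigr => k _.
by rewrite !adjmxE rmorphM mulrC.
Qed.

Lemma adjmx_tens p q r s (A : 'M[T]_(p, q)) (B : 'M[T]_(r, s)) :
  adj (A *t B) = adj A *t adj B.
Proof. by apply/matrixP => i j; rewrite !mxE rmorphM. Qed.

Lemma inner_conj m (u v : 'cV[T]_m) : inner v u = cj (inner u v).
Proof. by rewrite /inner rmorph_sum; apply: eq_bigr => i _; rewrite rmorphM cjK mulrC. Qed.

Lemma mul_inner_conj m (u v : 'cV[T]_m) :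
  inner u v * inner v u = `|inner u v| ^+ 2.
Proof. by rewrite [inner v u]inner_conj mul_conj. Qed.

Lemma inner_unitary m (U : 'M[T]_m) (u v : 'cV[T]_m) :
  adj U *m U = 1%:M -> inner (U *m u) (U *m v) = inner u v.
Proof. by move=> UU; rewrite !innerE adjmxM -mulmxA (mulmxA (adj U)) UU mul1mx. Qed.

Lemma onb_transition m (B C : 'M[T]_m) : onb cj B -> onb cj C ->
  exists2 U, adj U *m U = 1%:M & U *m B = C.
Proof.
move=> /onbP BB /onbP CC; exists (C *m adj B).
  by rewrite adjmxM adjmxK mulmxA -(mulmxA B) CC mulmx1 (mulmx1C BB).
by rewrite -mulmxA BB mulmx1.
Qed.

Lemma mub_set_unitary m n (U : 'M[T]_m) (B : 'I_n -> 'M[T]_m) :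
  adj U *m U = 1%:M -> mub_set cj B -> mub_set cj (fun k => U *m B k).
Proof.
move=> UU [onbB unbiased]; split => [k i j|k k' kk' j j']; rewrite !colE -!mulmxA.
  by rewrite inner_unitary // -!colE onbB.
by rewrite inner_unitary // -!colE unbiased.
Qed.

Definition dyad m (u : 'cV[T]_m) : 'M[T]_m := u *m adj u.

Lemma dyadE m (u : 'cV[T]_m) a b : dyad u a b = u a 0 * cj (u b 0).
Proof. by rewrite mxE big_ord1 adjmxE. Qed.

Lemma coord_projE m (B : 'M[T]_m) J :
  coord_proj cj B J = \sum_j (j \in J)%:R *: dyad (col j B).
Proof.
rewrite /coord_proj big_mkcond /=; apply: eq_bigr => j _.
by case: (j \in J); rewrite ?scale1r ?scale0r.
Qed.

Lemma sum_dyad_onb m (B : 'M[T]_m) : onb cj B -> \sum_j dyad (col j B) = 1%:M.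
Proof.
move/onb_mul_adj <-; apply/matrixP => a b; rewrite summxE mxE.
by apply: eq_bigr => j _; rewrite dyadE !mxE.
Qed.

Lemma coord_proj_unitary m (U B : 'M[T]_m) J :
  U *m coord_proj cj B J *m adj U = coord_proj cj (U *m B) J.
Proof.
rewrite /coord_proj mulmx_sumr mulmx_suml; apply: eq_bigr => j _.
have colM : col j (U *m B) = U *m col j B by rewrite !colE mulmxA.
by rewrite colM adjmxM !mulmxA.
Qed.

Definition qform m (M : 'M[T]_m) (x : 'cV[T]_m) : T := (adj x *m M *m x) 0 0.

Lemma qform_sum m (I : Type) (r : seq I) (P : pred I) (F : I -> 'M[T]_m) x :
  qform (\sum_(i <- r | P i) F i) x = \sum_(i <- r | P i) qform (F i) x.
Proof. by rewrite /qform mulmx_sumr mulmx_suml summxE. Qed.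

Lemma qform_tens m (A C : 'M[T]_m) (x y : 'cV[T]_m) :
  qform (A *t C) (x *t y) = qform A x * qform C y.
Proof.
rewrite /qform; change ((adj (x *t y) *m (A *t C) *m (x *t y)) 0 0 = qform A x * qform C y).
rewrite adjmx_tens !tensmx_mul !mxE.
set a := (mxtens_unindex _).1; set b := (mxtens_unindex _).2.
by rewrite [a]ord1 [b]ord1 /qform !mxE.
Qed.

Lemma qform_coord_proj m (B : 'M[T]_m) J x :
  qform (coord_proj cj B J) x = \sum_(j in J) inner (col j B) x * inner x (col j B).
Proof.
rewrite /coord_proj qform_sum; apply: eq_bigr => j _.
rewrite /qform !innerE !mulmxA -(mulmxA _ (adj (col j B))) [LHS]mxE big_ord1.
by rewrite mulrC.
Qed.

Definition hsprod p q (X Y : 'M[T]_(p, q)) : T := \sum_i \sum_j X i j * cj (Y i j).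

Lemma hsprodC p q (X Y : 'M[T]_(p, q)) : hsprod Y X = cj (hsprod X Y).
Proof.
rewrite /hsprod rmorph_sum; apply: eq_bigr => i _; rewrite rmorph_sum.
by apply: eq_bigr => j _; rewrite rmorphM cjK mulrC.
Qed.

Lemma hsprodDl p q (X Y Z : 'M[T]_(p, q)) : hsprod (X + Y) Z = hsprod X Z + hsprod Y Z.
Proof.
rewrite /hsprod -big_split; apply: eq_bigr => i _; rewrite -big_split.
by apply: eq_bigr => j _; rewrite mxE mulrDl.
Qed.

Lemma hsprodBl p q (X Y Z : 'M[T]_(p, q)) : hsprod (X - Y) Z = hsprod X Z - hsprod Y Z.
Proof.
rewrite /hsprod -sumrB; apply: eq_bigr => i _; rewrite -sumrB.
by apply: eq_bigr => j _; rewrite !mxE mulrBl.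
Qed.

Lemma hsprodBr p q (X Y Z : 'M[T]_(p, q)) : hsprod Z (X - Y) = hsprod Z X - hsprod Z Y.
Proof. by rewrite hsprodC hsprodBl rmorphB -!hsprodC. Qed.

Lemma hsprod_suml p q (I : Type) (r : seq I) (P : pred I) (F : I -> 'M[T]_(p, q)) Y :
  hsprod (\sum_(i <- r | P i) F i) Y = \sum_(i <- r | P i) hsprod (F i) Y.
Proof.
elim/big_rec2: _ => [|i y M _ <-]; last by rewrite hsprodDl.
by rewrite /hsprod big1 // => a _; rewrite big1 // => b _; rewrite mxE mul0r.
Qed.

Lemma hsprod_sumr p q (I : Type) (r : seq I) (P : pred I) (F : I -> 'M[T]_(p, q)) Y :
  hsprod Y (\sum_(i <- r | P i) F i) = \sum_(i <- r | P i) hsprod Y (F i).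
Proof. by rewrite hsprodC hsprod_suml rmorph_sum; apply: eq_bigr => i _; rewrite -hsprodC. Qed.

Lemma hsprod_eq0 p q (X : 'M[T]_(p, q)) : hsprod X X = 0 -> X = 0.
Proof.
have sq_ge0 x : 0 <= x * cj x by rewrite mul_conj exprn_ge0.
move=> XX0; apply/matrixP => i j; rewrite mxE.
have row_ge0 i' : 0 <= \sum_j X i' j * cj (X i' j) by apply: sumr_ge0.
have rowi0 := psumr_eq0P (fun i _ => row_ge0 i) XX0 (i := i) isT.
have := psumr_eq0P (fun j _ => sq_ge0 (X i j)) rowi0 (i := j) isT.
by rewrite mul_conj => /eqP; rewrite sqrf_eq0 normr_eq0 => /eqP.
Qed.

Lemma hsprod_eq p q (X Y : 'M[T]_(p, q)) :
  hsprod X X = hsprod X Y -> hsprod Y Y = hsprod X Y -> cj (hsprod X Y) = hsprod X Y ->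
  X = Y.
Proof.
move=> XX YY XYreal; apply/eqP; rewrite -subr_eq0; apply/eqP/hsprod_eq0.
by rewrite !(hsprodBl, hsprodBr) XX YY [hsprod Y X]hsprodC XYreal !subrr.
Qed.

Lemma hsprod_tens p q r s (A C : 'M[T]_(p, q)) (B D : 'M[T]_(r, s)) :
  hsprod (A *t B) (C *t D) = hsprod A C * hsprod B D.
Proof.
rewrite /hsprod sum_mxtens_index mulr_suml; apply: eq_bigr => a _.
rewrite mulr_suml; under eq_bigr => b _ do rewrite sum_mxtens_index.
rewrite exchange_big /=; apply: eq_bigr => c _.
rewrite mulr_sumr; apply: eq_bigr => b _; rewrite mulr_sumr; apply: eq_bigr => d _.
by rewrite !tensmxE rmorphM mulrACA.
Qed.

Lemma hsprod_dyad m (u v : 'cV[T]_m) :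
  hsprod (dyad u) (dyad v) = inner u v * inner v u.
Proof.
rewrite /hsprod /inner mulr_suml; apply: eq_bigr => a _.
rewrite mulr_sumr; apply: eq_bigr => b _.
by rewrite !dyadE rmorphM cjK; ring.
Qed.

Section Twirl.
Variables (al be : T) (m : nat).

Lemma sum_delta (F : 'I_m -> T) a : \sum_y F y * (a == y)%:R = F a.
Proof.
rewrite (bigD1 a) //= eqxx mulr1 big1 ?addr0 // => y ya.
by rewrite eq_sym (negbTE ya) mulr0.
Qed.

Lemma sum_delta2 (F : 'I_m -> 'I_m -> T) a b :
  \sum_y \sum_w F y w * ((a == y)%:R * (b == w)%:R) = F a b.
Proof.
rewrite -(sum_delta (fun y => F y b) a); apply: eq_bigr => y _.
by rewrite -(sum_delta (F y) b) mulr_suml; apply: eq_bigr => w _; rewrite mulrA mulrAC.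
Qed.

Definition twirl_entry (x z y w : 'I_m) : T :=
  al * ((x == y)%:R * (z == w)%:R + (x == w)%:R * (z == y)%:R) +
  be * ((x == z)%:R * (y == w)%:R).

(* Row (x, z) and column (y, w) of [al (1 + W) + be v v^*], where W swaps the
   tensor factors and v = vec 1. *)
Definition twirl_mx : 'M[T]_(m * m) :=
  \matrix_(k, l) twirl_entry (mxtens_unindex k).1 (mxtens_unindex k).2
                             (mxtens_unindex l).1 (mxtens_unindex l).2.

Lemma twirl_mxE x z y w :
  twirl_mx (mxtens_index (x, z)) (mxtens_index (y, w)) = twirl_entry x z y w.
Proof. by rewrite mxE !mxtens_indexK. Qed.

Lemma sum_twirl_entry (H : 'I_m -> 'I_m -> T) x z :
  \sum_y \sum_w H y w * twirl_entry x z y w =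
  al * (H x z + H z x) + be * (\sum_y H y y) * (x == z)%:R.
Proof.
transitivity (\sum_y \sum_w ((al * H y w) * ((x == y)%:R * (z == w)%:R) +
                             (al * H y w) * ((z == y)%:R * (x == w)%:R) +
                             (be * H y w * (x == z)%:R) * (y == w)%:R)).
  by apply: eq_bigr => y _; apply: eq_bigr => w _; rewrite /twirl_entry; ring.
under eq_bigr => y _ do rewrite !big_split /= sum_delta.
by rewrite !big_split /= !sum_delta2 -mulr_suml -mulr_sumr; ring.
Qed.

Hypotheses (cj_al : cj al = al) (cj_be : cj be = be).

Lemma hsprod_twirl (X : 'M[T]_(m * m)) :
  hsprod X twirl_mx =
  al * (\sum_x \sum_z X (mxtens_index (x, z)) (mxtens_index (x, z)) +
        \sum_x \sum_z X (mxtens_index (x, z)) (mxtens_index (z, x))) +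
  be * \sum_x \sum_y X (mxtens_index (x, x)) (mxtens_index (y, y)).
Proof.
transitivity (\sum_x \sum_z \sum_y \sum_w
  X (mxtens_index (x, z)) (mxtens_index (y, w)) * twirl_entry x z y w).
  rewrite /hsprod sum_mxtens_index; apply: eq_bigr => x _; apply: eq_bigr => z _.
  rewrite sum_mxtens_index; apply: eq_bigr => y _; apply: eq_bigr => w _.
  by rewrite twirl_mxE /twirl_entry !(rmorphD, rmorphM, rmorph_nat, cj_al, cj_be).
under eq_bigr => x _ do under eq_bigr => z _ do rewrite sum_twirl_entry.
under eq_bigr => x _ do rewrite big_split /= sum_delta -mulr_sumr big_split /=.
by rewrite big_split /= -!mulr_sumr big_split.
Qed.

Lemma hsprod_twirl_twirl :
  hsprod twirl_mx twirl_mx =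
  al * (al * (m * m)%:R + (al + be) * m%:R) *+ 2 + be * (be * (m * m)%:R + al *+ 2 * m%:R).
Proof.
have sum_delta_const (a b : T) :
    \sum_(x < m) \sum_(z < m) (a + b * (x == z)%:R) = a * (m * m)%:R + b * m%:R.
  under eq_bigr => x _ do rewrite big_split /= sumr_const card_ord sum_delta.
  by rewrite big_split /= !sumr_const !card_ord !mulr_natr mulrnA.
have entry_xzxz x z : twirl_mx (mxtens_index (x, z)) (mxtens_index (x, z)) =
    al + (al + be) * (x == z)%:R.
  by rewrite twirl_mxE /twirl_entry !eqxx (eq_sym z x); case: (x == z) => /=; ring.
have entry_xzzx x z : twirl_mx (mxtens_index (x, z)) (mxtens_index (z, x)) =
    al + (al + be) * (x == z)%:R.
  by rewrite twirl_mxE /twirl_entry !eqxx (eq_sym z x); case: (x == z) => /=; ring.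
have entry_xxyy x y : twirl_mx (mxtens_index (x, x)) (mxtens_index (y, y)) =
    be + al *+ 2 * (x == y)%:R.
  by rewrite twirl_mxE /twirl_entry !eqxx; case: (x == y) => /=; ring.
rewrite hsprod_twirl.
rewrite (eq_bigr _ (fun x _ => eq_bigr _ (fun z _ => entry_xzxz x z))).
rewrite (eq_bigr _ (fun x _ => eq_bigr _ (fun z _ => entry_xzzx x z))).
rewrite (eq_bigr _ (fun x _ => eq_bigr _ (fun y _ => entry_xxyy x y))).
by rewrite !sum_delta_const; ring.
Qed.

(* The [v v^*] part sees [p (x) p] through |b^T b|^2, which is 1 only for real b. *)
Hypothesis be0_or_real : be = 0 \/ cj =1 id.

Lemma hsprod_dyad_twirl (b : 'cV[T]_m) :
  inner b b = 1 -> hsprod (dyad b *t dyad b) twirl_mx = al *+ 2 + be.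
Proof.
move=> bb; set p := dyad b.
have sum_sq (f : 'I_m -> T) : \sum_x \sum_z f x * f z = (\sum_x f x) ^+ 2.
  by rewrite expr2 big_distrlr.
have entry1 x z : (p *t p) (mxtens_index (x, z)) (mxtens_index (x, z)) =
    b x 0 * cj (b x 0) * (b z 0 * cj (b z 0)) by rewrite tensmxE !dyadE.
have entry2 x z : (p *t p) (mxtens_index (x, z)) (mxtens_index (z, x)) =
    b x 0 * cj (b x 0) * (b z 0 * cj (b z 0)) by rewrite tensmxE !dyadE; ring.
have entry3 x y : (p *t p) (mxtens_index (x, x)) (mxtens_index (y, y)) =
    (b x 0 * cj (b y 0)) ^+ 2 by rewrite tensmxE !dyadE.
rewrite hsprod_twirl.
rewrite (eq_bigr _ (fun x _ => eq_bigr _ (fun z _ => entry1 x z))).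
rewrite (eq_bigr _ (fun x _ => eq_bigr _ (fun z _ => entry2 x z))).
rewrite (eq_bigr _ (fun x _ => eq_bigr _ (fun y _ => entry3 x y))).
rewrite sum_sq -/(inner b b) bb expr1n mulrDr mulr1 -mulr2n.
case: be0_or_real => [-> | cj_id]; first by rewrite mul0r.
suff -> : \sum_x \sum_y (b x 0 * cj (b y 0)) ^+ 2 = inner b b ^+ 2 by rewrite bb expr1n mulr1.
rewrite expr2 big_distrlr; apply: eq_bigr => x _; apply: eq_bigr => y _.
by rewrite !cj_id /=; ring.
Qed.

End Twirl.

Section MutuallyUnbiased.
Variables (n m : nat) (B : 'I_n -> 'M[T]_m).
Hypothesis mubB : mub_set cj B.

Local Notation p k j := (dyad (col j (B k))).

Definition mub_tensor : 'M[T]_(m * m) := \sum_k \sum_j (p k j *t p k j).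

Lemma hsprod_mub_dyads k j k' j' :
  hsprod (p k j *t p k j) (p k' j' *t p k' j') =
  if k == k' then (j == j')%:R else m%:R ^- 2.
Proof.
rewrite hsprod_tens hsprod_dyad; have [kk'|kk'] := eqVneq k k'; first rewrite -kk'.
  by rewrite !mubB.1 eq_sym; case: (j' == j) => /=; ring.
by rewrite mul_inner_conj mubB.2 // -exprVn expr2.
Qed.

Lemma hsprod_mub_tensor : (0 < m)%N ->
  hsprod mub_tensor mub_tensor = (n * m)%:R * (1 + n.-1%:R / m%:R).
Proof.
move=> m_gt0; have sum_inv_sq : \sum_(j < m) m%:R ^- 2 = m%:R^-1 :> T.
  by rewrite sumr_const card_ord -[_ *+ m]mulr_natr expr2 invfM mulfVK // pnatr_eq0 -lt0n.
have row k j :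
    \sum_k' \sum_j' hsprod (p k j *t p k j) (p k' j' *t p k' j') = 1 + n.-1%:R / m%:R.
  under eq_bigr => k' _ do under eq_bigr => j' _ do rewrite hsprod_mub_dyads.
  rewrite (bigD1 k) //= eqxx (bigD1 j) //= eqxx big1 ?addr0 => [|j' j'j]; last first.
    by rewrite eq_sym (negbTE j'j).
  rewrite (eq_bigr (fun _ => m%:R^-1)) => [|k' k'k]; last first.
    by under eq_bigr do rewrite eq_sym (negbTE k'k); rewrite sum_inv_sq.
  by rewrite (eq_bigl (mem (predC1 k))) // sumr_const cardC1 card_ord mulr_natl.
rewrite /mub_tensor hsprod_suml; under eq_bigr => k _ do rewrite hsprod_suml.
under eq_bigr => k _ do under eq_bigr => j _ do
  (rewrite hsprod_sumr; under eq_bigr => k' _ do rewrite hsprod_sumr; rewrite row).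
by rewrite !sumr_const !card_ord (mulr_natl _ (n * m)) mulrnA mulrnAC.
Qed.

Variables (al be : T).
Hypotheses (cj_al : cj al = al) (cj_be : cj be = be) (be0_or_real : be = 0 \/ cj =1 id).

Lemma hsprod_mub_twirl : hsprod mub_tensor (twirl_mx al be m) = (n * m)%:R * (al *+ 2 + be).
Proof.
rewrite /mub_tensor hsprod_suml; under eq_bigr => k _ do rewrite hsprod_suml.
under eq_bigr => k _ do under eq_bigr => j _ do
  rewrite (hsprod_dyad_twirl cj_al cj_be be0_or_real) ?mubB.1 ?eqxx //.
by rewrite !sumr_const !card_ord (mulr_natl _ (n * m)) mulrnA mulrnAC.
Qed.

Lemma mub_tensor_twirl : (0 < m)%N ->
  1 + n.-1%:R / m%:R = al *+ 2 + be ->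
  hsprod (twirl_mx al be m) (twirl_mx al be m) = (n * m)%:R * (al *+ 2 + be) ->
  mub_tensor = twirl_mx al be m.
Proof.
move=> m_gt0 frame_potential twirl_norm; apply: hsprod_eq.
- by rewrite hsprod_mub_tensor // hsprod_mub_twirl frame_potential.
- by rewrite twirl_norm hsprod_mub_twirl.
- by rewrite hsprod_mub_twirl rmorphM rmorph_nat rmorphD rmorphMn cj_al cj_be.
Qed.

End MutuallyUnbiased.

Section DesignTensor.
Variables (n m : nat) (S : {set {set 'I_m}}).
Implicit Types (B : 'I_n -> 'M[T]_m).

Definition design_tensor B : 'M[T]_(m * m) :=
  \sum_(i in [pred p : 'I_n * {set 'I_m} | p.2 \in S])
    (coord_proj cj (B i.1) i.2 *t coord_proj cj (B i.1) i.2).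

Lemma design_tensorE B :
  design_tensor B = \sum_k \sum_(J in S) (coord_proj cj (B k) J *t coord_proj cj (B k) J).
Proof. by rewrite pair_big /=; apply: eq_bigl => -[k J]; rewrite inE. Qed.

Lemma design_tensor_unitary (U : 'M[T]_m) B :
  \sum_(i in [pred p : 'I_n * {set 'I_m} | p.2 \in S])
    ((U *m coord_proj cj (B i.1) i.2 *m adj U) *t (U *m coord_proj cj (B i.1) i.2 *m adj U)) =
  design_tensor (fun k => U *m B k).
Proof. by apply: eq_bigr => i _; rewrite coord_proj_unitary. Qed.

Lemma sum_blocks_natr (P : pred {set 'I_m}) :
  \sum_(J in S) (P J)%:R = #|[set J in S | P J]|%:R :> T.
Proof. by rewrite card_blocks natr_sum. Qed.

Lemma design_tensor_balanced lam mu B : mub_set cj B ->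
  (forall j j', pair_count S j j' = lam + mu * (j == j'))%N ->
  design_tensor B = (n * lam)%:R *: (1%:M *t 1%:M) + mu%:R *: mub_tensor B.
Proof.
move=> [onbB _] balanced.
pose p k j := dyad (col j (B k)).
have per_basis k : \sum_(J in S) (coord_proj cj (B k) J *t coord_proj cj (B k) J) =
    lam%:R *: (1%:M *t 1%:M) + mu%:R *: \sum_j (p k j *t p k j).
  have tens_proj J : coord_proj cj (B k) J *t coord_proj cj (B k) J =
      \sum_j \sum_j' ((j \in J) && (j' \in J))%:R *: (p k j *t p k j').
    rewrite !coord_projE tensmx_suml; apply: eq_bigr => j _.
    rewrite tensmx_sumr; apply: eq_bigr => j' _.
    by rewrite tensmxZl tensmxZr scalerA -natrM mulnb.
  rewrite (eq_bigr _ (fun J _ => tens_proj J)) exchange_big /=.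
  under eq_bigr => j _ do rewrite exchange_big /=.
  under eq_bigr => j _ do under eq_bigr => j' _ do
    rewrite -scaler_suml sum_blocks_natr -/(pair_count S j j') balanced natrD natrM scalerDl.
  under eq_bigr => j _ do rewrite big_split /=.
  rewrite big_split /=; congr (_ + _).
    rewrite -(sum_dyad_onb (onbB k)) tensmx_suml scaler_sumr; apply: eq_bigr => j _.
    by rewrite tensmx_sumr scaler_sumr.
  rewrite scaler_sumr; apply: eq_bigr => j _.
  rewrite (bigD1 j) //= eqxx mulr1 big1 ?addr0 // => j' j'j.
  by rewrite eq_sym (negbTE j'j) mulr0 scale0r.
rewrite design_tensorE (eq_bigr _ (fun k _ => per_basis k)) big_split /=.
by rewrite sumr_const card_ord scaler_sumr scalerMnl natrM mulr_natl.
Qed.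

Lemma qform_design_tensor B k0 a a' : mub_set cj B ->
  qform (design_tensor B) (col a (B k0) *t col a' (B k0)) =
  (pair_count S a a')%:R + (\sum_(J in S) (#|J|%:R / m%:R) ^+ 2) *+ n.-1.
Proof.
move=> [onbB unbiased]; rewrite design_tensorE qform_sum (bigD1 k0) //=; congr (_ + _).
  rewrite qform_sum -sum_blocks_natr; apply: eq_bigr => J _.
  have same_basis x : \sum_(j in J)
      inner (col j (B k0)) (col x (B k0)) * inner (col x (B k0)) (col j (B k0)) = (x \in J)%:R.
    rewrite big_mkcond /= (bigD1 x) //= big1 ?addr0 => [|j jx].
      by rewrite !onbB !eqxx mulr1; case: (x \in J).
    by rewrite !onbB (negbTE jx) mul0r; case: (j \in J).
  by rewrite qform_tens !qform_coord_proj !same_basis -natrM mulnb.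
rewrite (eq_bigr (fun _ => \sum_(J in S) (#|J|%:R / m%:R) ^+ 2)) => [|k kk0].
  by rewrite (eq_bigl (mem (predC1 k0))) // sumr_const cardC1 card_ord.
rewrite qform_sum; apply: eq_bigr => J _.
have other_basis x : \sum_(j in J)
    inner (col j (B k)) (col x (B k0)) * inner (col x (B k0)) (col j (B k)) = #|J|%:R / m%:R.
  rewrite (eq_bigr (fun _ => m%:R^-1)) => [|j _]; last by rewrite mul_inner_conj unbiased.
  by rewrite sumr_const mulr_natl.
by rewrite qform_tens !qform_coord_proj !other_basis expr2.
Qed.

End DesignTensor.

Lemma pair_count_perm_invariant n m (B : 'I_n -> 'M[T]_m) (S : {set {set 'I_m}}) (k0 : 'I_n) :
  mub_set cj B ->
  grass2design cj [pred p : 'I_n * {set 'I_m} | p.2 \in S] (fun p => coord_proj cj (B p.1) p.2) ->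
  forall (s : {perm 'I_m}) a a', pair_count S (s a) (s a') = pair_count S a a'.
Proof.
move=> mubB design s a a'.
have [U UU UB] := onb_transition (mubB.1 k0) (onb_col_perm s (mubB.1 k0)).
have invariant : design_tensor S B = design_tensor S (fun k => U *m B k).
  by rewrite -design_tensor_unitary; exact: design.
have col_s x : col x (U *m B k0) = col (s x) (B k0).
  by rewrite UB; apply/matrixP => i j; rewrite !mxE.
have := qform_design_tensor S k0 a a' (mub_set_unitary UU mubB).
rewrite !col_s -invariant qform_design_tensor // => /addIr /eqP.
by rewrite eqr_nat => /eqP.
Qed.

(* The two numeric identities say that the squared norms of [mub_tensor B] and
   of the twirl both equal their inner product, see [mub_tensor_twirl]. *)
Theorem grass2design_iff_block_design n m h (al be : T) (B : 'I_n -> 'M[T]_m)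
    (S : {set {set 'I_m}}) :
  m = h.*2 -> (0 < h)%N -> (0 < n)%N ->
  cj al = al -> cj be = be -> be = 0 \/ cj =1 id ->
  1 + n.-1%:R / m%:R = al *+ 2 + be ->
  al * (al * (m * m)%:R + (al + be) * m%:R) *+ 2 + be * (be * (m * m)%:R + al *+ 2 * m%:R) =
    (n * m)%:R * (al *+ 2 + be) ->
  mub_set cj B -> (forall J, J \in S -> #|J| = h) -> #|S| = (2 * (m - 1))%N ->
  grass2design cj [pred p : 'I_n * {set 'I_m} | p.2 \in S] (fun p => coord_proj cj (B p.1) p.2)
  <-> block_design2 m h (h - 1) S.
Proof.
move=> m_eq h_gt0 n_gt0 cj_al cj_be be0_or_real frame_potential twirl_norm mubB uniformS cardS.
split=> [design | [_ balanced]].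
  split=> // T2 /eqP/cards2P[a [a' [aa' ->]]]; rewrite card_pair_blocks.
  apply: pair_count_half => //.
  exact: perm_invariant_offdiag (pair_count_perm_invariant (Ordinal n_gt0) mubB design).
have offdiag a a' : a != a' -> pair_count S a a' = (h - 1)%N.
  by move=> aa'; rewrite -card_pair_blocks balanced // cards2 aa'.
have pair_count_design := pair_count_half_design m_eq h_gt0 cardS uniformS offdiag.
have m_gt0 : (0 < m)%N by rewrite m_eq double_gt0.
have twirl_normE : hsprod (twirl_mx al be m) (twirl_mx al be m) = (n * m)%:R * (al *+ 2 + be).
  by rewrite hsprod_twirl_twirl.
move=> U UU; rewrite design_tensor_unitary -/(design_tensor S B).
have mubUB := mub_set_unitary UU mubB.
rewrite (design_tensor_balanced mubB pair_count_design).
rewrite (design_tensor_balanced mubUB pair_count_design).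
by rewrite !(mub_tensor_twirl _ cj_al cj_be be0_or_real).
Qed.

End Conjugation.

Lemma grass2design_dim0 (T : numFieldType) (cj : T -> T) (I : finType) (D : {pred I})
    (P : I -> 'M[T]_0) :
  grass2design cj D P.
Proof. by move=> U _; apply/matrixP => -[]. Qed.

Lemma block_design2_dim0 (S : {set {set 'I_0}}) : block_design2 0 0 0 S.
Proof.
have card0 (J : {set 'I_0}) : #|J| = 0%N.
  by apply/eqP; rewrite -leqn0 (leq_trans (max_card _)) ?card_ord.
by split=> [J _|J]; rewrite card0.
Qed.

Lemma dF_kF c m : ~~ odd m -> (2 * dF c m = kF c m * (2 * (m - 1)))%N.
Proof.
move=> even_m; have m_eq : m = m./2.*2 by rewrite -[LHS](odd_double_half m) (negbTE even_m).
by case: c; rewrite /dF /kF {1 2}m_eq; nia.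
Qed.

Section Fields.
Variable R : rcfType.

Lemma grass2design_iff_block_design_complex m h (B : 'I_m.+1 -> 'M[R[i]]_m)
    (S : {set {set 'I_m}}) :
  m = h.*2 -> (0 < h)%N -> mub_set conjc B ->
  (forall J, J \in S -> #|J| = h) -> #|S| = (2 * (m - 1))%N ->
  grass2design conjc [pred p : 'I_m.+1 * {set 'I_m} | p.2 \in S]
    (fun p => coord_proj conjc (B p.1) p.2)
  <-> block_design2 m h (h - 1) S.
Proof.
move=> m_eq h_gt0; have m_neq0 : m%:R != 0 :> R[i] by rewrite pnatr_eq0 m_eq double_eq0 -lt0n.
apply: (grass2design_iff_block_design (@conjcK R) _ m_eq h_gt0 (ltn0Sn m)
          (rmorph1 _) (rmorph0 _) (or_introl erefl)).
- by move=> x; rewrite sqr_normc.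
- by rewrite /= divff // addr0.
- by rewrite !natrM mulrS; ring.
Qed.

Lemma grass2design_iff_block_design_real m h (B : 'I_h.+1 -> 'M[R]_m)
    (S : {set {set 'I_m}}) :
  m = h.*2 -> (0 < h)%N -> mub_set idfun B ->
  (forall J, J \in S -> #|J| = h) -> #|S| = (2 * (m - 1))%N ->
  grass2design idfun [pred p : 'I_h.+1 * {set 'I_m} | p.2 \in S]
    (fun p => coord_proj idfun (B p.1) p.2)
  <-> block_design2 m h (h - 1) S.
Proof.
move=> m_eq h_gt0; have h_neq0 : h%:R != 0 :> R by rewrite pnatr_eq0 -lt0n.
apply: (grass2design_iff_block_design (cj := idfun) (fun=> erefl) _ m_eq h_gt0 (ltn0Sn h)
          (erefl (2^-1 : R)) (erefl (2^-1 : R)) (or_intror (fun=> erefl))).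
- by move=> x; rewrite real_normK ?num_real // expr2.
- by rewrite m_eq -mul2n natrM /=; field.
- by rewrite m_eq -mul2n !natrM mulrS; field.
Qed.

End Fields.

Theorem theorem3p17 (R : realType) (c : bool) (m l : nat)
    (B : 'I_(kF c m) -> 'M[Fld R c]_m) (S : {set {set 'I_m}}) :
  ~~ odd m ->
  mub_set (@fconj R c) B ->
  (forall J, J \in S -> #|J| = l) ->
  fusion_frame (@fconj R c) (2 * dF c m)%N m./2
    [pred p : 'I_(kF c m) * {set 'I_m} | p.2 \in S]
    (fun p => coord_proj (@fconj R c) (B p.1) p.2) ->
  (grass2design (@fconj R c)
     [pred p : 'I_(kF c m) * {set 'I_m} | p.2 \in S]
     (fun p => coord_proj (@fconj R c) (B p.1) p.2)
   <-> block_design2 m m./2 (m./2 - 1)%N S).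
Proof.
(* The block size l is forced to be m/2 by the rank condition of the frame. *)
move=> even_m mubB _ frameF.
have m_eq : m = m./2.*2 by rewrite -[LHS](odd_double_half m) (negbTE even_m).
have kF_gt0 : (0 < kF c m)%N by case: (c).
have [uniformS cardS] := fusion_frame_blocks (Ordinal kF_gt0) mubB frameF.
have [h0|h_gt0] := posnP m./2.
  rewrite h0 in m_eq; subst m; split=> _; first exact: block_design2_dim0.
  exact: grass2design_dim0.
have {}cardS : #|S| = (2 * (m - 1))%N.
  by apply/eqP; rewrite -(eqn_pmul2l kF_gt0) cardS dF_kF.
clear frameF kF_gt0; case: c B mubB => B mubB.
  exact: grass2design_iff_block_design_complex.
exact: grass2design_iff_block_design_real.
Qed.
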